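(* In the relational model described in the context, for every $\lambda$-term $M$ and every repetition-free list $\vec x=(x_1,\dots,x_k)$ of variables with $\mathrm{FV}(M)\subseteq\{x_1,\dots,x_k\}$, one has $[\![M]\!]^v_{\vec x}\subseteq[\![M^v]\!]_{\vec x}$. Moreover, there exists a closed $\lambda$-term $N$ such that $[\![N]\!]^v\neq[\![N^v]\!]$.
   Context: Bang calculus terms: $T,S ::= x\mid \lambda x.T\mid T\,S\mid \mathrm{der}\,T\mid\ !T$. CbV translation of $\lambda$-terms: $x^v=\,!x$, $(\lambda x.M)^v=\,!(\lambda x.M^v)$, $(MN)^v=(\mathrm{der}\,M^v)\,N^v$. Types: the sets $\mathcal{U}$ and $!\mathcal{U}$ are defined by mutual induction: $\alpha,\beta ::= a\mid a\multimap\alpha$ (elements of $\mathcal{U}$) and $a,b ::= [\alpha_1,\dots,\alpha_k]$, $k\ge0$, finite multisets of elements of $\mathcal{U}$ (elements of $!\mathcal{U}$); so $!\mathcal{U}\subseteq\mathcal{U}$. Environments $\Gamma$ map variables to $!\mathcal{U}$ with $\Gamma(x)\neq[\,]$ for finitely many $x$; $x_1{:}a_1,\dots,x_k{:}a_k$ denotes the environment with those values and $[\,]$ elsewhere; $\Gamma+\Delta$ is pointwise multiset union. System $\vdash_v$ (on $\lambda$-terms): (ax) $x{:}a\vdash_v x:a$; (app) from $\Gamma\vdash_v M:[a\multimap b]$ and $\Delta\vdash_v N:a$ infer $\Gamma+\Delta\vdash_v MN:b$; (lam) from $\Gamma_i,y{:}a_i\vdash_v M:b_i$ for $1\le i\le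 k$ ($k\ge0$) infer $\sum_i\Gamma_i\vdash_v\lambda y.M:[a_1\multimap b_1,\dots,a_k\multimap b_k]$ (here $a,b,a_i,b_i\in!\mathcal{U}$). System $\vdash_!$ (on bang terms): (ax) $x{:}[\alpha]\vdash_! x:\alpha$; (@) from $\Gamma\vdash_! T:a\multimap\beta$ and $\Delta\vdash_! S:a$ infer $\Gamma+\Delta\vdash_! T\,S:\beta$; (!) from $\Gamma_i\vdash_! T:\beta_i$ for $1\le i\le k$ ($k\ge0$) infer $\sum_i\Gamma_i\vdash_!\,!T:[\beta_1,\dots,\beta_k]$; (der) from $\Gamma\vdash_! T:[\alpha]$ infer $\Gamma\vdash_!\mathrm{der}\,T:\alpha$; ($\lambda$) from $\Gamma,x{:}a\vdash_! T:\beta$ infer $\Gamma\vdash_!\lambda x.T:a\multimap\beta$. Interpretations: $[\![M]\!]^v_{\vec x}=\{(a_1,\dots,a_k,\beta)\mid x_1{:}a_1,\dots,x_k{:}a_k\vdash_v M:\beta\text{ derivable}\}$ and $[\![T]\!]_{\vec x}=\{(a_1,\dots,a_k,\beta)\mid x_1{:}a_1,\dots,x_k{:}a_k\vdash_! T:\beta\text{ derivable}\}$; for closed terms and empty list these are sets of types. *)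

From Stdlib Require Import List Arith PeanoNat.
Import ListNotations.

Definition var := nat.

Inductive lterm : Type :=
| Var : var -> lterm
| Lam : var -> lterm -> lterm
| App : lterm -> lterm -> lterm.

Inductive bterm : Type :=
| BVar : var -> bterm
| BLam : var -> bterm -> bterm
| BApp : bterm -> bterm -> bterm
| Der  : bterm -> bterm
| Bang : bterm -> bterm.

Fixpoint fv (M : lterm) : list var :=
  match M with
  | Var x => [x]
  | Lam x M => filter (fun y => negb (Nat.eqb x y)) (fv M)
  | App M N => fv M ++ fv N
  end.

Fixpoint cbv (M : lterm) : bterm :=
  match M with
  | Var x => Bang (BVar x)
  | Lam x M => Bang (BLam x (cbv M))
  | App M N => BApp (Der (cbv M)) (cbv N)
  end.

(* The set U is represented by [ty]; an element of !U (a finite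
   multiset of elements of U) is represented by a list [list ty], taken up to
   permutation (see [ms_eq]).  [TM a] is the element a of !U seen in U, and
   [TArr a alpha] is a -o alpha. *)
Inductive ty : Type :=
| TM : list ty -> ty
| TArr : list ty -> ty -> ty.

Inductive ty_eq : ty -> ty -> Prop :=
| teq_M l l' : ms_eq l l' -> ty_eq (TM l) (TM l')
| teq_A a a' b b' : ms_eq a a' -> ty_eq b b' -> ty_eq (TArr a b) (TArr a' b')
with ms_eq : list ty -> list ty -> Prop :=
| meq_nil : ms_eq [] []
| meq_cons x y l l' : ty_eq x y -> ms_eq l l' -> ms_eq (x :: l) (y :: l')
| meq_swap x y l : ms_eq (x :: y :: l) (y :: x :: l)
| meq_trans l1 l2 l3 : ms_eq l1 l2 -> ms_eq l2 l3 -> ms_eq l1 l3.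

(* Environments: total maps var -> !U ([] = empty multiset). *)
Definition env := var -> list ty.
Definition env0 : env := fun _ => [].
Definition env_add (G D : env) : env := fun y => G y ++ D y.
Definition env_single (x : var) (a : list ty) : env :=
  fun y => if Nat.eqb x y then a else [].
(* G with x removed: if G' = G, x:a then env_rm G' x = G and G' x = a *)
Definition env_rm (G : env) (x : var) : env :=
  fun y => if Nat.eqb x y then [] else G y.
Definition env_eq (G D : env) : Prop := forall y, ms_eq (G y) (D y).

Fixpoint mkenv (xs : list var) (as_ : list (list ty)) : env :=
  match xs, as_ with
  | x :: xs', a :: as' => env_add (env_single x a) (mkenv xs' as')
  | _, _ => env0
  end.

Inductive typv : env -> lterm -> list ty -> Prop :=
| tv_ax x a : typv (env_single x a) (Var x) a
| tv_app G D M N a b :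
    typv G M [TArr a (TM b)] -> typv D N a -> typv (env_add G D) (App M N) b
| tv_lam G y M l : typv_lams G y M l -> typv G (Lam y M) l
(* the k premises of rule (lam), k >= 0 *)
with typv_lams : env -> var -> lterm -> list ty -> Prop :=
| tvl_nil y M : typv_lams env0 y M []
| tvl_cons G D y M b l :
    typv G M b -> typv_lams D y M l ->
    typv_lams (env_add (env_rm G y) D) y M (TArr (G y) (TM b) :: l).

Inductive typb : env -> bterm -> ty -> Prop :=
| tb_ax x alpha : typb (env_single x [alpha]) (BVar x) alpha
| tb_app G D T S a beta :
    typb G T (TArr a beta) -> typb D S (TM a) -> typb (env_add G D) (BApp T S) beta
| tb_bang G T l : typb_bangs G T l -> typb G (Bang T) (TM l)
| tb_der G T alpha : typb G T (TM [alpha]) -> typb G (Der T) alpha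
| tb_lam G x T beta : typb G T beta -> typb (env_rm G x) (BLam x T) (TArr (G x) beta)
(* the k premises of rule (!), k >= 0 *)
with typb_bangs : env -> bterm -> list ty -> Prop :=
| tbb_nil T : typb_bangs env0 T []
| tbb_cons G D T beta l :
    typb G T beta -> typb_bangs D T l -> typb_bangs (env_add G D) T (beta :: l).

(* Interpretations, as predicates on tuples (a_1..a_k, beta), taken up to
   equality of types (multisets up to permutation).  The v-interpretation
   consists of types in !U, seen as elements of U via TM. *)
Definition sem_v (xs : list var) (M : lterm) (as_ : list (list ty)) (t : ty) : Prop :=
  length as_ = length xs /\
  exists G b, typv G M b /\ env_eq G (mkenv xs as_) /\ ty_eq (TM b) t.

Definition sem_b (xs : list var) (T : bterm) (as_ : list (list ty)) (t : ty) : Prop :=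
  length as_ = length xs /\
  exists G beta, typb G T beta /\ env_eq G (mkenv xs as_) /\ ty_eq beta t.

(** The translation is sound because every rule of the CbV system is simulated
    by a fixed pattern of rules of the bang system: an axiom [x : a] by the
    promotion of [|a|] axioms, an application by a dereliction followed by an
    application, and the [k] premises of (lam) by the [k] premises of (!).
    The converse fails because every CbV type of an abstraction is a multiset
    of arrows [a -o b] with [b] in !U, whereas dereliction lets the bang system
    type (lambda x. x x)^v with [([] -o beta) -o beta] for an arbitrary arrow
    type beta. *)

From Stdlib Require Import List FunctionalExtensionality.
Import ListNotations.

Scheme typv_mind := Induction for typv Sort Prop
with typv_lams_mind := Induction for typv_lams Sort Prop.

Fixpoint ty_eq_refl (t : ty) : ty_eq t t :=
  let fix ms_eq_refl (l : list ty) : ms_eq l l :=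
    match l with
    | [] => meq_nil
    | x :: l' => meq_cons _ _ _ _ (ty_eq_refl x) (ms_eq_refl l')
    end in
  match t with
  | TM l => teq_M _ _ (ms_eq_refl l)
  | TArr a b => teq_A _ _ _ _ (ms_eq_refl a) (ty_eq_refl b)
  end.

Lemma env_single_nil (x : var) : env_single x [] = env0.
Proof.
  apply functional_extensionality; intro y.
  unfold env_single, env0; destruct (Nat.eqb x y); reflexivity.
Qed.

Lemma env_single_cons (x : var) (alpha : ty) (a : list ty) :
  env_single x (alpha :: a) = env_add (env_single x [alpha]) (env_single x a).
Proof.
  apply functional_extensionality; intro y.
  unfold env_single, env_add; destruct (Nat.eqb x y); reflexivity.
Qed.

Lemma typb_bangs_var (x : var) (a : list ty) :
  typb_bangs (env_single x a) (BVar x) a.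
Proof.
  induction a as [|alpha a IH].
  - rewrite env_single_nil; constructor.
  - rewrite env_single_cons; constructor; [constructor | exact IH].
Qed.

Lemma typv_cbv (G : env) (M : lterm) (b : list ty) :
  typv G M b -> typb G (cbv M) (TM b).
Proof.
  revert G M b.
  apply (typv_mind
    (fun G M b _ => typb G (cbv M) (TM b))
    (fun G y M l _ => typb_bangs G (BLam y (cbv M)) l)); simpl; intros.
  - constructor; apply typb_bangs_var.
  - econstructor; [constructor|]; eassumption.
  - constructor; assumption.
  - constructor.
  - constructor; [constructor|]; assumption.
Qed.

Lemma sem_v_sem_b (xs : list var) (M : lterm) (as_ : list (list ty)) (t : ty) :
  sem_v xs M as_ t -> sem_b xs (cbv M) as_ t.
Proof.
  intros [Hlen [G [b [Hty [HG Hb]]]]].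
  split; [exact Hlen|].
  exists G, (TM b); auto using typv_cbv.
Qed.

Definition v_arrow (t : ty) : Prop :=
  match t with
  | TArr _ (TM _) => True
  | _ => False
  end.

Definition v_value (t : ty) : Prop :=
  match t with
  | TM l => Forall v_arrow l
  | TArr _ _ => False
  end.

Lemma v_arrow_ty_eq (t t' : ty) : ty_eq t t' -> v_arrow t -> v_arrow t'.
Proof.
  intros [l l' _ | a a' b b' _ Hb]; simpl; [tauto|].
  destruct Hb; tauto.
Qed.

Lemma Forall_v_arrow_ms_eq (l l' : list ty) :
  ms_eq l l' -> Forall v_arrow l -> Forall v_arrow l'.
Proof.
  induction 1; intro Hl; auto.
  - inversion Hl; subst; constructor; eauto using v_arrow_ty_eq.
  - inversion Hl as [|? ? Hx Hyl]; inversion Hyl; subst; repeat constructor; auto.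
Qed.

Lemma v_value_ty_eq (t t' : ty) : ty_eq t t' -> v_value t -> v_value t'.
Proof.
  intros [l l' Hl | a a' b b' _ _]; simpl; [|tauto].
  apply Forall_v_arrow_ms_eq; exact Hl.
Qed.

Lemma typv_lams_v_arrow (G : env) (y : var) (M : lterm) (l : list ty) :
  typv_lams G y M l -> Forall v_arrow l.
Proof. induction 1; constructor; simpl; auto. Qed.

Lemma sem_v_lam_v_value (xs : list var) (y : var) (M : lterm)
    (as_ : list (list ty)) (t : ty) :
  sem_v xs (Lam y M) as_ t -> v_value t.
Proof.
  intros [_ [G [b [Hty [_ Hb]]]]].
  apply (v_value_ty_eq _ _ Hb).
  inversion Hty as [| | ? ? ? ? Hl]; subst.
  exact (typv_lams_v_arrow _ _ _ _ Hl).
Qed.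

Definition self_app : lterm := Lam 0 (App (Var 0) (Var 0)).

Lemma sem_b_self_app (beta : ty) :
  sem_b [] (cbv self_app) [] (TM [TArr [TArr [] beta] beta]).
Proof.
  split; [reflexivity|].
  set (G := env_add (env_add (env_single 0 [TArr [] beta]) env0) env0).
  assert (Hbody : typb G (BApp (Der (Bang (BVar 0))) (Bang (BVar 0))) beta).
  { apply tb_app with (a := []); repeat constructor. }
  exists (env_add (env_rm G 0) env0), (TM [TArr (G 0) beta]).
  split; [repeat constructor; exact Hbody|].
  split; [|apply ty_eq_refl].
  intros [|y]; constructor.
Qed.

Theorem mainTheorem3 :
  (forall (M : lterm) (xs : list var),
      NoDup xs -> incl (fv M) xs ->
      forall (as_ : list (list ty)) (t : ty),
        sem_v xs M as_ t -> sem_b xs (cbv M) as_ t)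
  /\
  (exists N : lterm, fv N = nil /\
      ~ (forall t : ty, sem_v nil N nil t <-> sem_b nil (cbv N) nil t)).
Proof.
  split.
  - intros M xs _ _; apply sem_v_sem_b.
  - exists self_app; split; [reflexivity|]; intro Hsem.
    set (beta := TArr [] (TM [])).
    pose proof (proj2 (Hsem _) (sem_b_self_app beta)) as Hv.
    exact (Forall_inv (sem_v_lam_v_value _ _ _ _ _ Hv)).
Qed.
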